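(* Let $\mu\in\mathbb F_q\setminus\{0\}$. Every line of $\mathcal W_0$ has $0$, $1$, $2$ or $q+1$ points in common with $\mathcal Q_\mu$, and each of these four values occurs for some line of $\mathcal W_0$.
   Context: Let $q$ be an even prime power and $n\ge 2$ an integer. Let $\mathrm{PG}(2n+1,q)$ have homogeneous coordinates $(X_1,\dots,X_{2n+2})$. Fix $\delta\in\mathbb F_q$ such that $X^2+X+\delta$ is irreducible over $\mathbb F_q$. For $\mu\in\mathbb F_q$ let $\mathcal Q_\mu$ be the elliptic quadric $X_1^2+X_1X_{2n+2}+\delta X_{2n+2}^2+\sum_{i=2}^{n+1}X_iX_{2n+3-i}+\mu(X_{2n}^2+X_{2n}X_{2n+1}+\delta X_{2n+1}^2)=0$. Let $\mathcal W_0$ be the symplectic polar space defined by the alternating form $B_0(X,Y)=\sum_{i=1}^{2n+2}X_iY_{2n+3-i}$; its lines are the totally isotropic lines. *)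

From HB Require Import structures.
From mathcomp Require Import all_boot all_order all_algebra all_field.
Set Implicit Arguments. Unset Strict Implicit. Unset Printing Implicit Defensive.
Import Order.TTheory GRing.Theory Num.Theory.
Local Open Scope ring_scope.

(* Vectors of F^(2n+2) are row vectors 'rV[F]_(n.*2.+2); the paper's
   coordinate X_i (1-based) is the 0-based coordinate i-1. *)
Definition crd (F : fieldType) (n : nat) (v : 'rV[F]_(n.*2.+2)) (i : nat) : F :=
  v ord0 (inord i).

Definition Qmu (F : fieldType) (n : nat) (delta mu : F) (v : 'rV[F]_(n.*2.+2)) : F :=
  let x := crd v in
  x 0%N ^+ 2 + x 0%N * x n.*2.+1 + delta * x n.*2.+1 ^+ 2
  + \sum_(1 <= i < n.+1) x i * x (n.*2.+1 - i)%N
  + mu * (x n.*2.-1 ^+ 2 + x n.*2.-1 * x n.*2 + delta * x n.*2 ^+ 2).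

Definition B0 (F : fieldType) (n : nat) (u v : 'rV[F]_(n.*2.+2)) : F :=
  \sum_(i < n.*2.+2) u ord0 i * v ord0 (rev_ord i).

Definition W0_line (F : fieldType) (n : nat) (L : 'M[F]_(2, n.*2.+2)) : Prop :=
  \rank L = 2%N /\
  forall u v : 'rV[F]_(n.*2.+2), (u <= L)%MS -> (v <= L)%MS -> B0 u v = 0.

(* The projective points of the line L lying on Q_mu; a projective point is
   represented by the (canonical) 1-dimensional subspace <<v>> it spans. *)
Definition line_quadric_points (F : finFieldType) (n : nat) (delta mu : F)
    (L : 'M[F]_(2, n.*2.+2)) : {set 'M[F]_(n.*2.+2)} :=
  [set (<<v>>%MS : 'M[F]_(n.*2.+2)) | v in
     [set v : 'rV[F]_(n.*2.+2) | [&& v != 0, (v <= L)%MS & Qmu delta mu v == 0]]].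

From HB Require Import structures.
From mathcomp Require Import all_boot all_order all_algebra all_field.
From mathcomp Require Import ring zify.
Set Implicit Arguments. Unset Strict Implicit. Unset Printing Implicit Defensive.
Import GRing.Theory.
Local Open Scope ring_scope.

(* On a line <u, w>, Q_mu restricts to the binary quadratic form
   Q (u + a w) = Q u + a B (u, w) + a^2 Q w on the projective line F ∪ {∞},
   whose point ∞ is a zero exactly when the a^2-coefficient vanishes.  So either
   the form vanishes identically (q + 1 points) or it is a nonzero polynomial in
   a of degree d <= 2, contributing at most d zeros in F plus ∞ when d <= 1: at
   most two points in all.  Each value is attained by a totally isotropic line
   spanned by basis vectors: a line of the hyperbolic part lies on Q_mu,
   <e_1, e_2> meets it only in e_2, on <e_{2n+1}, e_{2n}> it restricts to the
   anisotropic form mu (X^2 + XY + delta Y^2), and replacing e_{2n+1} by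
   e_{2n+1} - mu delta e_2 turns this into mu X (X + Y). *)

Lemma irreducible_no_root (R : idomainType) (p : {poly R}) (x : R) :
  irreducible_poly p -> (2 < size p)%N -> ~~ root p x.
Proof.
move=> irr_p p_gt2; rewrite -dvdp_XsubCl; apply/negP => dvd_p.
have /eqp_size : 'X - x%:P %= p by apply: irr_p dvd_p; rewrite size_XsubC.
by rewrite size_XsubC => p2; rewrite -p2 in p_gt2.
Qed.

Lemma card_roots_lt_size (R : finIdomainType) (p : {poly R}) :
  p != 0 -> (#|[set x | root p x]| < size p)%N.
Proof.
move=> p_nz; rewrite cardE; apply: max_poly_roots p_nz _ (enum_uniq _).
by apply/allP => x; rewrite mem_enum inE.
Qed.

Definition binary_form (R : pzRingType) (A B C : R) (o : option R) : R :=
  if o is Some a then A + a * B + a ^+ 2 * C else C.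

Lemma card_binary_form_zeros (F : finFieldType) (A B C : F) :
  #|[set o | binary_form A B C o == 0]| \in [:: 0%N; 1%N; 2%N; #|F|.+1].
Proof.
pose p := A%:P + B *: 'X + C *: 'X^2.
have coef_p j : p`_j = [:: A; B; C]`_j.
  by rewrite !coefE; case: j => [|[|[|j]]]; rewrite /= ?nth_nil; ring.
have [p0 | p_nz] := eqVneq p 0.
  have [A0 B0 C0] : [/\ A = 0, B = 0 & C = 0].
    by split; [move: (coef_p 0%N) | move: (coef_p 1%N) | move: (coef_p 2%N)];
      rewrite p0 coef0.
  suff -> : #|[set o | binary_form A B C o == 0]| = #|F|.+1 by rewrite !inE eqxx !orbT.
  rewrite -card_option; apply: eq_card => o.
  by rewrite inE A0 B0 C0; case: o => [a|] /=; rewrite ?mulr0 ?addr0 eqxx.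
suff : (#|[set o | binary_form A B C o == 0%R]| <= 2)%N by case: #|_| => [|[|[|]]].
have size_p : (size p <= (C != 0%R).+2)%N.
  by apply/leq_sizeP => -[|[|[|j]]]; rewrite coef_p /= ?nth_nil //; case: eqP.
have roots_p : (#|[set a | root p a]| < size p)%N := card_roots_lt_size p_nz.
have zeros_sub : [set o | binary_form A B C o == 0] \subset
    (if C == 0 then [set None] else set0) :|: Some @: [set a | root p a].
  apply/subsetP => -[a|]; rewrite inE /= => zero_o; rewrite in_setU.
    apply/orP; right; apply: imset_f; rewrite inE /root !(hornerD, hornerZ, hornerC, hornerX, hornerXn).
    by rewrite -(eqP zero_o); apply/eqP; ring.
  by rewrite zero_o inE.
apply: leq_trans (subset_leq_card zeros_sub) _.
apply: leq_trans (leq_card_setU _ _) _.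
rewrite card_imset; last by move=> x y [].
by case: (C =P 0) size_p roots_p => _; rewrite ?cards1 ?cards0 /=; lia.
Qed.

Section LineParametrization.
Variables (F : fieldType) (m : nat).
Implicit Types (L : 'M[F]_(2, m)) (o : option F).

(* The projective line is modelled by option F: Some a is the point
   row 0 + a row 1 and None the point row 1 at infinity. *)
Definition line_coord o : 'rV[F]_2 :=
  if o is Some a then delta_mx 0 0 + a *: delta_mx 0 1 else delta_mx 0 1.

Definition line_param L o : 'rV[F]_m := line_coord o *m L.

Lemma line_param_Some L a : line_param L (Some a) = row 0 L + a *: row 1 L.
Proof. by rewrite /line_param mulmxDl -scalemxAl -!rowE. Qed.

Lemma line_param_None L : line_param L None = row 1 L.
Proof. by rewrite rowE. Qed.

Lemma line_coord_neq0 o : line_coord o != 0.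
Proof.
apply/eqP => /rowP/(_ (if o is Some _ then 0 else 1)).
by case: o => [a|]; rewrite !mxE /= ?mulr0 ?addr0 => /eqP; rewrite oner_eq0.
Qed.

Lemma ord2_cases (j : 'I_2) : j = 0 \/ j = 1.
Proof. by case: j => -[|[|//]] ?; [left | right]; apply: val_inj. Qed.

Lemma rV2_line_coord (D : 'rV[F]_2) : exists o k, D = k *: line_coord o.
Proof.
have [D0 | D0_nz] := eqVneq (D 0 0) 0.
  exists None, (D 0 1); apply/rowP => j; rewrite !mxE.
  by case: (ord2_cases j) => -> /=; rewrite ?D0 ?mulr0 ?mulr1.
exists (Some (D 0 1 / D 0 0)), (D 0 0); apply/rowP => j; rewrite !mxE.
by case: (ord2_cases j) => -> /=; rewrite ?mulr0 ?addr0 ?mulr1 ?add0r // mulrC mulfVK.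
Qed.

Lemma line_coord_scale_inj o1 o2 k : line_coord o1 = k *: line_coord o2 -> o1 = o2.
Proof.
move=> /rowP e; move: (e 0) (e 1) => {e}.
case: o1 => [a1|]; case: o2 => [a2|] //=; rewrite !mxE /= ?mulr0 ?addr0 ?mulr1 ?add0r.
- by move=> <-; rewrite mul1r => ->.
- by move/eqP; rewrite oner_eq0.
- by move=> <-; rewrite mul0r => /eqP; rewrite oner_eq0.
Qed.

Lemma line_param_genmx_inj L :
  row_free L -> injective (fun o => <<line_param L o>>%MS).
Proof.
move=> free_L o1 o2 /= /genmxP/andP[/sub_rVP[k eq12] _].
by apply: (@line_coord_scale_inj _ _ k); apply: (row_free_inj free_L); rewrite -scalemxAl.
Qed.

End LineParametrization.

Section LineZeros.
Variables (F : finFieldType) (m : nat) (Q : 'rV[F]_m -> F).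
Hypothesis QZ : forall a v, Q (a *: v) = a ^+ 2 * Q v.
Implicit Types (L : 'M[F]_(2, m)).

Definition line_zero_points L : {set 'M[F]_m} :=
  [set <<v>>%MS | v in [set v : 'rV[F]_m | [&& v != 0, (v <= L)%MS & Q v == 0]]].

Lemma line_zero_pointsE L : row_free L ->
  line_zero_points L =
  [set <<line_param L o>>%MS | o in [set o | Q (line_param L o) == 0]].
Proof.
move=> free_L; apply/setP => X; apply/imsetP/imsetP => [[v] | [o]].
- rewrite inE => /and3P[v_nz /submxP[D def_v] Qv] ->; move: v_nz Qv; rewrite def_v.
  have [o [k ->]] := rV2_line_coord D; rewrite -scalemxAl => v_nz Qv.
  have k_nz : k != 0 by apply: contraNneq v_nz => ->; rewrite scale0r.
  exists o; last exact/eq_genmx/eqmx_scale.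
  by move: Qv; rewrite inE QZ mulf_eq0 expf_eq0 (negbTE k_nz).
- rewrite inE => Qo ->; exists (line_param L o) => //.
  by rewrite inE Qo andbT mulmx_free_eq0 // line_coord_neq0 submxMl.
Qed.

Lemma card_line_zero_points L : row_free L ->
  #|line_zero_points L| = #|[set o | Q (line_param L o) == 0]|.
Proof.
move=> free_L; rewrite line_zero_pointsE // card_in_imset // => o1 o2 _ _.
exact: line_param_genmx_inj.
Qed.

Variable P : 'rV[F]_m -> 'rV[F]_m -> F.
Hypothesis QDZ : forall a u w, Q (u + a *: w) = Q u + a * P u w + a ^+ 2 * Q w.

Lemma card_line_zero_points_quadratic L : row_free L ->
  #|line_zero_points L| \in [:: 0%N; 1%N; 2%N; #|F|.+1].
Proof.
move=> free_L; rewrite card_line_zero_points //.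
have -> : [set o | Q (line_param L o) == 0] =
    [set o | binary_form (Q (row 0 L)) (P (row 0 L) (row 1 L)) (Q (row 1 L)) o == 0].
  by apply/setP => -[a|]; rewrite !inE ?line_param_Some ?line_param_None ?QDZ.
exact: card_binary_form_zeros.
Qed.

End LineZeros.

Section Coordinates.
Variables (F : fieldType) (n : nat).
Local Notation vec := 'rV[F]_(n.*2.+2).
Implicit Types (u v w : vec) (f g : nat -> F).

Lemma crdD u v i : crd (u + v) i = crd u i + crd v i.
Proof. by rewrite /crd mxE. Qed.

Lemma crdZ a u i : crd (a *: u) i = a * crd u i.
Proof. by rewrite /crd mxE. Qed.

Definition Qmu_polar (delta mu : F) u w : F :=
  let x := crd u in let y := crd w in
  x 0%N * y 0%N *+ 2 + (x 0%N * y n.*2.+1 + y 0%N * x n.*2.+1)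
  + delta * (x n.*2.+1 * y n.*2.+1) *+ 2
  + \sum_(1 <= i < n.+1) (x i * y (n.*2.+1 - i)%N + y i * x (n.*2.+1 - i)%N)
  + mu * (x n.*2.-1 * y n.*2.-1 *+ 2 + (x n.*2.-1 * y n.*2 + y n.*2.-1 * x n.*2)
          + delta * (x n.*2 * y n.*2) *+ 2).

Lemma QmuDZ (delta mu a : F) u w :
  Qmu delta mu (u + a *: w) =
  Qmu delta mu u + a * Qmu_polar delta mu u w + a ^+ 2 * Qmu delta mu w.
Proof.
rewrite /Qmu /Qmu_polar /= !crdD !crdZ.
have -> : \sum_(1 <= i < n.+1) crd (u + a *: w) i * crd (u + a *: w) (n.*2.+1 - i)
  = \sum_(1 <= i < n.+1) crd u i * crd u (n.*2.+1 - i)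
    + a * \sum_(1 <= i < n.+1) (crd u i * crd w (n.*2.+1 - i) + crd w i * crd u (n.*2.+1 - i))
    + a ^+ 2 * \sum_(1 <= i < n.+1) crd w i * crd w (n.*2.+1 - i).
  rewrite !mulr_sumr -!big_split; apply: eq_bigr => i _ /=.
  rewrite !crdD !crdZ; ring.
ring.
Qed.

Lemma QmuZ (delta mu a : F) u : Qmu delta mu (a *: u) = a ^+ 2 * Qmu delta mu u.
Proof.
rewrite /Qmu /= !crdZ.
have -> : \sum_(1 <= i < n.+1) crd (a *: u) i * crd (a *: u) (n.*2.+1 - i)
  = a ^+ 2 * \sum_(1 <= i < n.+1) crd u i * crd u (n.*2.+1 - i).
  by rewrite !mulr_sumr; apply: eq_bigr => i _ /=; rewrite !crdZ; ring.
ring.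
Qed.

Lemma B0_mulmxl k (D : 'rV[F]_k) (L : 'M[F]_(k, n.*2.+2)) v :
  B0 (D *m L) v = \sum_(r < k) D 0 r * B0 (row r L) v.
Proof.
rewrite /B0; under eq_bigr do rewrite mxE mulr_suml.
rewrite exchange_big; apply: eq_bigr => r _; rewrite mulr_sumr.
by apply: eq_bigr => i _; rewrite !mxE mulrA.
Qed.

Lemma B0_mulmxr k (D : 'rV[F]_k) (L : 'M[F]_(k, n.*2.+2)) u :
  B0 u (D *m L) = \sum_(r < k) D 0 r * B0 u (row r L).
Proof.
rewrite /B0; under eq_bigr do rewrite mxE mulr_sumr.
rewrite exchange_big; apply: eq_bigr => r _; rewrite mulr_sumr.
by apply: eq_bigr => i _; rewrite !mxE mulrCA.
Qed.

Lemma B0_rows_isotropic k (L : 'M[F]_(k, n.*2.+2)) :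
  (forall r s, B0 (row r L) (row s L) = 0) ->
  forall u v, (u <= L)%MS -> (v <= L)%MS -> B0 u v = 0.
Proof.
move=> L0 u v /submxP[D ->] /submxP[E ->]; rewrite B0_mulmxl big1 // => r _.
by rewrite B0_mulmxr big1 ?mulr0 // => s _; rewrite L0 mulr0.
Qed.

Lemma B0DZl a u v w : B0 (u + a *: v) w = B0 u w + a * B0 v w.
Proof.
by rewrite /B0 mulr_sumr -big_split; apply: eq_bigr => i _; rewrite !mxE mulrDl mulrA.
Qed.

Definition coord_row f : vec := \row_j f j.

Lemma coord_rowDZ a f g :
  coord_row (fun j => f j + a * g j) = coord_row f + a *: coord_row g.
Proof. by apply/rowP => j; rewrite !mxE. Qed.

Definition std_coord (k : nat) : nat -> F := fun j => if j == k then 1 else 0.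

Definition pair_mx f g : 'M[F]_(2, n.*2.+2) :=
  \matrix_(i, j) if i == 0 then f j else g j.

Lemma Qmu_coord_row (delta mu : F) f :
  Qmu delta mu (coord_row f) =
  f 0%N ^+ 2 + f 0%N * f n.*2.+1 + delta * f n.*2.+1 ^+ 2
  + \sum_(1 <= i < n.+1) f i * f (n.*2.+1 - i)%N
  + mu * (f n.*2.-1 ^+ 2 + f n.*2.-1 * f n.*2 + delta * f n.*2 ^+ 2).
Proof.
have crd_f i : (i < n.*2.+2)%N -> crd (coord_row f) i = f i.
  by move=> lt_i; rewrite /crd mxE inordK.
rewrite /Qmu !crd_f; try lia.
by congr (_ + _ + _); apply: eq_big_nat => i /andP[? ?]; rewrite !crd_f //; lia.
Qed.

Lemma B0_coord_row f g :
  B0 (coord_row f) (coord_row g) = \sum_(i < n.*2.+2) f i * g (n.*2.+1 - i)%N.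
Proof. by apply: eq_bigr => i _; rewrite !mxE /= subSS. Qed.

Lemma row_pair_mx f g (r : 'I_2) :
  row r (pair_mx f g) = coord_row (if r == 0 then f else g).
Proof. by apply/rowP => j; rewrite !mxE; case: (r == 0). Qed.

Lemma line_param_pair_mx f g o :
  line_param (pair_mx f g) o =
  coord_row (if o is Some a then fun j => f j + a * g j else g).
Proof.
case: o => [a|]; rewrite ?line_param_Some ?line_param_None !row_pair_mx //=.
by apply/rowP => j; rewrite !mxE.
Qed.

Lemma sum_std_coord (h : nat -> F) p : (p < n.*2.+2)%N ->
  \sum_(j < n.*2.+2) h j * std_coord p j = h p.
Proof.
move=> lt_p; rewrite (bigD1 (Ordinal lt_p)) //= big1 => [|j /negbTE].
  by rewrite /std_coord eqxx mulr1 addr0.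
by rewrite /std_coord -val_eqE /= => ->; rewrite mulr0.
Qed.

Lemma pair_mx_free f g p0 p1 :
  (p0 < n.*2.+2)%N -> (p1 < n.*2.+2)%N ->
  f p0 = 1 -> g p0 = 0 -> f p1 = 0 -> g p1 = 1 -> row_free (pair_mx f g).
Proof.
move=> lt_p0 lt_p1 f_p0 g_p0 f_p1 g_p1; apply/row_freeP.
exists (pair_mx (std_coord p0) (std_coord p1))^T; apply/matrixP => r s.
rewrite !mxE; under eq_bigr do rewrite !mxE.
by case: (ord2_cases r) => ->; case: (ord2_cases s) => -> /=; rewrite sum_std_coord.
Qed.

Lemma W0_line_pair_mx f g :
  row_free (pair_mx f g) ->
  B0 (coord_row f) (coord_row f) = 0 -> B0 (coord_row f) (coord_row g) = 0 ->
  B0 (coord_row g) (coord_row f) = 0 -> B0 (coord_row g) (coord_row g) = 0 ->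
  W0_line (pair_mx f g).
Proof.
move=> /eqP free_L ff fg gf gg; split=> //; apply: B0_rows_isotropic => r s.
by rewrite !row_pair_mx; case: (r == 0); case: (s == 0).
Qed.

Lemma B0_std_coord k g : (k < n.*2.+2)%N ->
  B0 (coord_row (std_coord k)) (coord_row g) = g (n.*2.+1 - k)%N.
Proof.
move=> lt_k; rewrite B0_coord_row; under eq_bigr do rewrite mulrC.
by rewrite (sum_std_coord (fun j => g (n.*2.+1 - j)%N)).
Qed.

End Coordinates.

Ltac decide_index_eqs :=
  repeat match goal with |- context [?x == ?y] =>
    match type of x with nat => case: (@eqP _ x y) => ?; try (exfalso; lia) end
  end; cbv beta iota.

Section ExampleLines.
Variables (F : finFieldType) (n : nat) (delta mu : F).
Hypothesis n_ge2 : (2 <= n)%N.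
Local Notation e := (std_coord F).

Lemma W0_line_std_pair k l :
  (k < n.*2.+2)%N -> (l < n.*2.+2)%N -> k != l -> (k + l != n.*2.+1)%N ->
  W0_line (pair_mx n (e k) (e l)).
Proof.
move=> lt_k lt_l kl kl_n; apply: W0_line_pair_mx.
- by apply: (@pair_mx_free _ _ _ _ k l) => //; rewrite /std_coord; decide_index_eqs.
all: by rewrite B0_std_coord // /std_coord; decide_index_eqs.
Qed.

Lemma card_quadric_points_W0 (L : 'M[F]_(2, n.*2.+2)) : W0_line L ->
  #|line_quadric_points delta mu L| = #|[set o | Qmu delta mu (line_param L o) == 0]|.
Proof.
move=> [rank_L _]; apply: (@card_line_zero_points F _ (Qmu delta mu) (QmuZ delta mu)).
by rewrite /row_free rank_L.
Qed.

Definition singular_line := pair_mx n (e 1) (e 2).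
Definition tangent_line := pair_mx n (e 0) (e 1).
Definition external_line := pair_mx n (e n.*2) (e n.*2.-1).
Definition secant_line := pair_mx n (fun j => e n.*2 j + (- mu * delta) * e 1 j) (e n.*2.-1).

Lemma W0_singular_line : W0_line singular_line.
Proof. by apply: W0_line_std_pair; lia. Qed.

Lemma W0_tangent_line : W0_line tangent_line.
Proof. by apply: W0_line_std_pair; lia. Qed.

Lemma W0_external_line : W0_line external_line.
Proof. by apply: W0_line_std_pair; lia. Qed.

Lemma W0_secant_line : 2%N \in [pchar F] -> W0_line secant_line.
Proof.
move=> /pcharf0 two0; apply: W0_line_pair_mx.
- by apply: (@pair_mx_free _ _ _ _ n.*2 n.*2.-1); rewrite /std_coord; decide_index_eqs; ring || lia.
all: rewrite ?[X in B0 X _]coord_rowDZ ?B0DZl !B0_std_coord; try lia.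
all: rewrite /std_coord; decide_index_eqs; try ring.
(* B0 pairs coordinates 1 and 2n, so the first generator is isotropic only in
   characteristic 2. *)
by transitivity (- mu * delta * 2%:R); [ring | rewrite two0 mulr0].
Qed.

Ltac eval_Qmu :=
  unfold singular_line, tangent_line, external_line, secant_line;
  rewrite line_param_pair_mx Qmu_coord_row big_ltn; last lia;
  rewrite big_nat_cond big1 => [|i /andP[/andP[? ?] _]];
  rewrite /std_coord; decide_index_eqs; ring.

Lemma card_singular_line : #|line_quadric_points delta mu singular_line| = #|F|.+1.
Proof.
have Q0 o : Qmu delta mu (line_param singular_line o) = 0 by case: o => [a|]; eval_Qmu.
rewrite card_quadric_points_W0; last exact: W0_singular_line.
rewrite -card_option.
by apply: eq_card => o; rewrite !inE Q0 eqxx.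
Qed.

Lemma card_tangent_line : #|line_quadric_points delta mu tangent_line| = 1%N.
Proof.
have Q_Some a : Qmu delta mu (line_param tangent_line (Some a)) = 1 by eval_Qmu.
have Q_None : Qmu delta mu (line_param tangent_line None) = 0 by eval_Qmu.
rewrite card_quadric_points_W0; last exact: W0_tangent_line.
suff -> : [set o | Qmu delta mu (line_param tangent_line o) == 0] = [set None].
  by rewrite cards1.
by apply/setP => -[a|]; rewrite !inE ?Q_Some ?Q_None ?oner_eq0 ?eqxx.
Qed.

Lemma card_external_line :
  irreducible_poly ('X^2 + 'X + delta%:P : {poly F}) -> mu != 0 ->
  #|line_quadric_points delta mu external_line| = 0%N.
Proof.
move=> irr mu_nz.
have Q_Some a : Qmu delta mu (line_param external_line (Some a)) =
  mu * ('X^2 + 'X + delta%:P : {poly F}).[a] by rewrite !hornerE; eval_Qmu.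
have Q_None : Qmu delta mu (line_param external_line None) = mu by eval_Qmu.
have size_p : size ('X^2 + 'X + delta%:P : {poly F}) = 3%N.
  by rewrite -addrA size_polyDl ?size_polyXn // size_XaddC.
rewrite card_quadric_points_W0; last exact: W0_external_line.
suff -> : [set o | Qmu delta mu (line_param external_line o) == 0] = set0.
  by rewrite cards0.
apply/setP => -[a|]; rewrite !inE ?Q_Some ?Q_None ?mulf_eq0 ?(negbTE mu_nz) //=.
by apply/negbTE; apply: irreducible_no_root irr _; rewrite size_p.
Qed.

Lemma card_secant_line : 2%N \in [pchar F] -> mu != 0 ->
  #|line_quadric_points delta mu secant_line| = 2%N.
Proof.
move=> pchar2 mu_nz.
have Q_Some a : Qmu delta mu (line_param secant_line (Some a)) = mu * (a * (a + 1)).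
  by eval_Qmu.
have Q_None : Qmu delta mu (line_param secant_line None) = mu by eval_Qmu.
rewrite card_quadric_points_W0; last exact: W0_secant_line.
suff -> : [set o | Qmu delta mu (line_param secant_line o) == 0] = [set Some 0; Some (-1)].
  by rewrite cards2 (inj_eq Some_inj) eq_sym oppr_eq0 oner_eq0.
apply/setP => -[a|]; rewrite !inE ?Q_Some ?Q_None ?(negbTE mu_nz) //.
by rewrite !(inj_eq Some_inj) mulf_eq0 (negbTE mu_nz) mulf_eq0 addr_eq0.
Qed.

End ExampleLines.

Theorem mainTheorem8 (F : finFieldType) (n : nat) (delta mu : F) :
  2%N \in [pchar F] ->
  (2 <= n)%N ->
  irreducible_poly ('X^2 + 'X + delta%:P : {poly F}) ->
  mu != 0 ->
  (forall L : 'M[F]_(2, n.*2.+2), W0_line L ->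
     #|line_quadric_points delta mu L| \in [:: 0%N; 1%N; 2%N; #|F|.+1]) /\
  (forall k, k \in [:: 0%N; 1%N; 2%N; #|F|.+1] ->
     exists L : 'M[F]_(2, n.*2.+2), W0_line L /\ #|line_quadric_points delta mu L| = k).
Proof.
move=> pchar2 n_ge2 irr mu_nz; split.
  move=> L [rank_L _].
  apply: (@card_line_zero_points_quadratic F _ (Qmu delta mu) (QmuZ delta mu) _ (QmuDZ delta mu)).
  by rewrite /row_free rank_L.
move=> k; rewrite !inE => /or4P[] /eqP ->.
- exists (external_line F n); split; [exact: W0_external_line | exact: card_external_line].
- exists (tangent_line F n); split; [exact: W0_tangent_line | exact: card_tangent_line].
- exists (secant_line n delta mu); split; [exact: W0_secant_line | exact: card_secant_line].
- exists (singular_line F n); split; [exact: W0_singular_line | exact: card_singular_line].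
Qed.
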